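(* Let $\mathbf C$ be an admissible category of lattices and $X$ a convergence space. The map $\eta_X:X\to\mathrm{pt}(\mathbb P X)$, sending $x$ to the point $S\mapsto 1$ if $x\in S$ and $S\mapsto\emptyset$ otherwise, is injective and initial, i.e. for every filter $\mathcal F$ of subsets of $X$ and every $x\in X$, $\mathcal F\to x$ in $X$ if and only if $\eta_X[\mathcal F]\to\eta_X(x)$ in $\mathrm{pt}(\mathbb P X)$. Moreover, $\eta_X$ is an isomorphism of convergence spaces if $\mathbf C$ is an admissible category of frames or an admissible category of coframes.
   Context: A filter on an inf-semilattice $L$ is a non-empty upward-closed subset closed under binary meets ($L$ itself allowed); $\mathbb F L$ is the set of filters. $\mathbb P(X)$ is the powerset of $X$. A category of lattices has lattices as objects and lattice morphisms (preserving finite suprema and infima) as morphisms; it is admissible if every $\mathbb P(X)$ is an object and there are classes of index sets $\mathcal I,\mathcal J$ such that morphisms $L\to L'$ are exactly monotone maps preserving all existing $I$-indexed infima ($I\in\mathcal I$) and $J$-indexed suprema ($J\in\mathcal J$). Categories of frames/coframes (with frame/coframe morphisms) are understood analogously. A convergence $\mathbf C$-object is $(L,\lim_L)$ with $\lim_L:\mathbb F L\to L$ monotone; morphisms $\varphi:L\to L'$ in $\mathbf C^{\mathrm{conv}}$ are $\mathbf C$-morphisms with $\lim_{L'}\mathcal F\le\varphi(\lim_L\varphi^{-1}(\mathcal F))$. A convergence space is a set $X$ with a relation $\to$ between filters of subsets and points such that $\dot x=\{S:x\in S\}\to x$ and convergence is preserved by enlarging the filter. For $f:X\to Y$, $f[\mathcal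 F]=\{B\subseteq Y:f^{-1}(B)\in\mathcal F\}$. $\mathbb P X$ denotes the convergence $\mathbf C$-object $(\mathbb P(X),\lim)$ with $\lim\mathcal F=\{x:\mathcal F\to x\}$. With $1=\{*\}$, $\mathbb P(1)=\{\emptyset,1\}$ and $\lim_{\mathbb P(1)}$ constantly $1$, the points of a convergence $\mathbf C$-object $L$ are the $\mathbf C^{\mathrm{conv}}$-morphisms $L\to\mathbb P(1)$; $\mathrm{pt}\,L$ is the set of points, $\ell^\bullet=\{\varphi\in\mathrm{pt}\,L:\varphi(\ell)=1\}$, $\mathcal F^\circ=\{\ell:\ell^\bullet\in\mathcal F\}$ for filters $\mathcal F$ of subsets of $\mathrm{pt}\,L$, and $\mathcal F\to\varphi$ in $\mathrm{pt}\,L$ iff $\varphi\in(\lim_L\mathcal F^\circ)^\bullet$. *)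

From mathcomp Require Import all_boot.
From mathcomp Require Import boolp classical_sets.
Set Implicit Arguments.
Unset Strict Implicit.
Unset Printing Implicit Defensive.
Local Open Scope classical_set_scope.

(** Filters on the powerset lattice P(X): non-empty, upward closed, closed
    under binary meets.  The improper filter P(X) is allowed. *)
Definition is_filter {X : Type} (F : set (set X)) : Prop :=
  (exists S, F S) /\
  (forall S T : set X, F S -> S `<=` T -> F T) /\
  (forall S T : set X, F S -> F T -> F (S `&` T)).

Definition principal {X : Type} (x : X) : set (set X) := [set S | S x].

Definition fmap {X Y : Type} (f : X -> Y) (F : set (set X)) : set (set Y) :=
  [set B | F (f @^-1` B)].

Definition is_conv_space {X : Type} (conv : set (set X) -> X -> Prop) : Prop :=
  (forall x, conv (principal x) x) /\
  (forall (F G : set (set X)) x,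
      is_filter F -> is_filter G -> F `<=` G -> conv F x -> conv G x).

Definition continuous_conv {X Y : Type} (cX : set (set X) -> X -> Prop)
  (cY : set (set Y) -> Y -> Prop) (f : X -> Y) : Prop :=
  forall F x, is_filter F -> cX F x -> cY (fmap f F) (f x).

Definition conv_iso {X Y : Type} (cX : set (set X) -> X -> Prop)
  (cY : set (set Y) -> Y -> Prop) (f : X -> Y) : Prop :=
  exists g : Y -> X, cancel f g /\ cancel g f /\
    continuous_conv cX cY f /\ continuous_conv cY cX g.

(** Morphisms of an admissible category C, given by classes I, J of index
    sets, between powerset objects P(A) -> P(B): monotone maps preserving all
    I-indexed infima and all J-indexed suprema (all of which exist in P(A)). *)
Definition cmor (I J : Type -> Prop) {A B : Type} (phi : set A -> set B) : Prop :=
  (forall S T : set A, S `<=` T -> phi S `<=` phi T) /\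
  (forall (K : Type) (f : K -> set A), I K ->
      phi (\bigcap_(k in setT) f k) = \bigcap_(k in setT) phi (f k)) /\
  (forall (K : Type) (f : K -> set A), J K ->
      phi (\bigcup_(k in setT) f k) = \bigcup_(k in setT) phi (f k)).

Definition lattice_mor {A B : Type} (phi : set A -> set B) : Prop :=
  phi set0 = set0 /\ phi setT = setT /\
  (forall S T, phi (S `|` T) = phi S `|` phi T) /\
  (forall S T, phi (S `&` T) = phi S `&` phi T).

Definition frame_mor {A B : Type} (phi : set A -> set B) : Prop :=
  phi setT = setT /\
  (forall S T, phi (S `&` T) = phi S `&` phi T) /\
  (forall (K : Type) (f : K -> set A),
      phi (\bigcup_(k in setT) f k) = \bigcup_(k in setT) phi (f k)).

Definition coframe_mor {A B : Type} (phi : set A -> set B) : Prop :=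
  phi set0 = set0 /\
  (forall S T, phi (S `|` T) = phi S `|` phi T) /\
  (forall (K : Type) (f : K -> set A),
      phi (\bigcap_(k in setT) f k) = \bigcap_(k in setT) phi (f k)).

(** (I, J) determine an admissible category of lattices / frames / coframes:
    the powersets are objects and the maps between them described by (I, J)
    are lattice (resp. frame, coframe) morphisms.  (The category whose objects
    are exactly the powersets is then admissible; only powerset objects occur
    in the theorem.) *)
Definition admissible_lat (I J : Type -> Prop) : Prop :=
  forall (A B : Type) (phi : set A -> set B), cmor I J phi -> lattice_mor phi.
Definition admissible_frm (I J : Type -> Prop) : Prop :=
  forall (A B : Type) (phi : set A -> set B), cmor I J phi -> frame_mor phi.
Definition admissible_cofrm (I J : Type -> Prop) : Prop :=
  forall (A B : Type) (phi : set A -> set B), cmor I J phi -> coframe_mor phi.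

Definition conv_mor (I J : Type -> Prop) {A B : Type}
  (limA : set (set A) -> set A) (limB : set (set B) -> set B)
  (phi : set A -> set B) : Prop :=
  cmor I J phi /\
  forall G : set (set B), is_filter G -> limB G `<=` phi (limA (phi @^-1` G)).

Definition lim_P {X : Type} (conv : set (set X) -> X -> Prop)
  (F : set (set X)) : set X := [set x | conv F x].

Definition lim_P1 (G : set (set unit)) : set unit := setT.

Definition is_point (I J : Type -> Prop) {X : Type}
  (conv : set (set X) -> X -> Prop) (phi : set X -> set unit) : Prop :=
  conv_mor I J (lim_P conv) lim_P1 phi.

Record pt (I J : Type -> Prop) (X : Type) (conv : set (set X) -> X -> Prop) :=
  Pt { ptval :> set X -> set unit; ptP : is_point I J conv ptval }.

Section PtConv.
Variables (I J : Type -> Prop) (X : Type) (conv : set (set X) -> X -> Prop).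

Definition bul (S : set X) : set (pt I J conv) := [set p | ptval p S = setT].
Definition circ (F : set (set (pt I J conv))) : set (set X) := [set S | F (bul S)].
Definition pt_conv (F : set (set (pt I J conv))) (p : pt I J conv) : Prop :=
  bul (lim_P conv (circ F)) p.
End PtConv.

Definition eta_fun {X : Type} (x : X) (S : set X) : set unit := [set _ : unit | S x].

Lemma eta_point (I J : Type -> Prop) (X : Type) (conv : set (set X) -> X -> Prop)
  (Hc : is_conv_space conv) (x : X) : is_point I J conv (eta_fun x).
Proof.
split.
  split; first by move=> S T ST u /= /ST.
  by split=> K f _; apply/seteqP; split=> u /=.
move=> G [[S0 GS0] [Gup Gmeet]] u _ /=.
have GT : G setT by apply: (Gup S0).
case: Hc => Hdot Hup; apply: (Hup (principal x)) => //.
- split; first by exists setT.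
  by split=> [S T /= Sx ST|S T /= ? ?]; [apply: ST|split].
- split.
    by exists setT; apply: (Gup setT).
  split=> [S T /= GS ST|S T /= GS GT'].
    by apply: Gup GS _ => v /=; apply: ST.
  by apply: Gup (Gmeet _ _ GS GT') _ => v [].
- move=> S /= Sx.
  by apply: (Gup setT).
Qed.

Definition eta (I J : Type -> Prop) {X : Type} {conv : set (set X) -> X -> Prop}
  (Hc : is_conv_space conv) (x : X) : pt I J conv :=
  @Pt I J X conv (eta_fun x) (eta_point I J Hc x).

(* eta_X(x) sends S to 1 exactly when x is in S, so eta_X^{-1}(l^bullet) = l;
   hence (eta_X[F])^circ = F and the convergence of pt (P X) pulled back along
   eta_X is that of X.  When points are frame morphisms, each point p is some
   eta_X(x): p preserves the empty union and the union of all singletons, so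
   it sends some {x} to 1, and meets with {x} show that p S = 1 iff x is in S.
   Coframe morphisms become frame morphisms under S |-> ~ p (~ S). *)
From mathcomp Require Import all_boot.
From mathcomp Require Import boolp classical_sets.
Set Implicit Arguments.
Unset Strict Implicit.
Unset Printing Implicit Defensive.
Local Open Scope classical_set_scope.

Lemma set_unit_eqT (u : set unit) : u tt -> u = setT.
Proof. by move=> utt; apply/seteqP; split=> // -[]. Qed.

Lemma eta_fun_eqT (X : Type) (x : X) (S : set X) : eta_fun x S = setT <-> S x.
Proof.
split=> [eSx|Sx]; last exact: set_unit_eqT.
by have : (setT : set unit) tt by []; rewrite -eSx.
Qed.

Lemma eta_fun_inj (X : Type) : injective (@eta_fun X).
Proof.
move=> x y /(congr1 (fun p => p [set x])) exy.
have : eta_fun y [set x] = setT by rewrite -exy; apply/eta_fun_eqT.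
by move/eta_fun_eqT.
Qed.

Lemma eq_eta_fun (X : Type) (p : set X -> set unit) (x : X) :
  (forall S, p S tt <-> S x) -> p = eta_fun x.
Proof. by move=> pE; apply: funext => S; apply/seteqP; split=> -[] /pE. Qed.

Lemma frame_mor_eta_fun (X : Type) (p : set X -> set unit) :
  frame_mor p -> exists x, p = eta_fun x.
Proof.
move=> [pT [pI pU]].
have p0 : p set0 = set0.
  have -> : set0 = \bigcup_(k in setT) (fun k : void => set0 : set X) k.
    by rewrite bigcup0.
  by rewrite pU bigcup0 // => -[].
have [x _ px] : (\bigcup_(x in setT) p [set x]) tt.
  by rewrite -pU bigcup_imset1 image_id pT.
exists x; apply: eq_eta_fun => S; split=> [pS|Sx].
  apply: contrapT => nSx.
  have : p (S `&` [set x]) tt by rewrite pI.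
  by rewrite setI1 memNset // p0.
by move: px; rewrite -(setIidr (_ : [set x] `<=` S)) ?pI => [[]|y ->].
Qed.

Lemma coframe_mor_setC (X : Type) (p : set X -> set unit) :
  coframe_mor p -> frame_mor (fun S => ~` p (~` S)).
Proof.
move=> [p0 [pU pI]]; split; first by rewrite setCT p0 setC0.
split=> [S T|K f]; first by rewrite setCI pU setCU.
by rewrite setC_bigcup pI setC_bigcap.
Qed.

Lemma coframe_mor_eta_fun (X : Type) (p : set X -> set unit) :
  coframe_mor p -> exists x, p = eta_fun x.
Proof.
move=> /coframe_mor_setC /frame_mor_eta_fun [x px]; exists x.
apply: eq_eta_fun => S.
have /= := congr1 (fun q => q (~` S) tt) px; rewrite setCK.
by move/notLR; rewrite notK => ->.
Qed.

Section PointsOfPowerset.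
Variables (I J : Type -> Prop) (X : Type) (conv : set (set X) -> X -> Prop).

Lemma ptval_inj : injective (@ptval I J X conv).
Proof.
by move=> [f fP] [g gP] /= efg; subst g; congr Pt; exact: Prop_irrelevance.
Qed.

Lemma points_eta_fun : admissible_frm I J \/ admissible_cofrm I J ->
  forall p : pt I J conv, exists x, ptval p = eta_fun x.
Proof.
move=> adm p; have [pC _] := ptP p.
by case: adm => [/(_ _ _ _ pC)|/(_ _ _ _ pC)];
  [exact: frame_mor_eta_fun|exact: coframe_mor_eta_fun].
Qed.

Section Spatial.
Variable g : pt I J conv -> X.
Hypothesis ptval_g : forall p, ptval p = eta_fun (g p).

Lemma bul_preimage (S : set X) : bul S = g @^-1` S.
Proof. by apply: funext => p; apply: propext; rewrite /bul /= ptval_g eta_fun_eqT. Qed.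

Lemma pt_conv_fmap (G : set (set (pt I J conv))) (p : pt I J conv) :
  pt_conv G p <-> conv (fmap g G) (g p).
Proof.
have circG : circ G = fmap g G.
  by apply: funext => S; rewrite /circ /fmap /= bul_preimage.
by rewrite /pt_conv circG /bul /= ptval_g eta_fun_eqT.
Qed.

End Spatial.

Variable Hc : is_conv_space conv.

Lemma eta_inj : injective (eta I J Hc).
Proof.
by move=> x y exy; apply: eta_fun_inj; exact: (congr1 (@ptval I J X conv) exy).
Qed.

Lemma preimage_eta_bul (S : set X) : eta I J Hc @^-1` bul S = S.
Proof. by apply: funext => y; apply: propext; rewrite /bul /= eta_fun_eqT. Qed.

Lemma conv_eta (F : set (set X)) (x : X) :
  conv F x <-> pt_conv (fmap (eta I J Hc) F) (eta I J Hc x).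
Proof.
have circF : circ (fmap (eta I J Hc) F) = F.
  by apply: funext => S; rewrite /circ /fmap /= preimage_eta_bul.
by rewrite /pt_conv circF /bul /= eta_fun_eqT.
Qed.

Lemma eta_conv_iso : (forall p : pt I J conv, exists x, ptval p = eta_fun x) ->
  conv_iso conv (@pt_conv I J X conv) (eta I J Hc).
Proof.
move=> /choice [g ptval_g]; exists g.
have etaK : cancel g (eta I J Hc).
  by move=> p; apply: ptval_inj; rewrite [RHS]ptval_g.
split; first by move=> x; apply: eta_inj; rewrite etaK.
split=> //; split=> [F x _ /conv_eta //|G p _].
by move/(pt_conv_fmap ptval_g).
Qed.

End PointsOfPowerset.

Theorem mainTheorem3 :
  (forall (I J : Type -> Prop), admissible_lat I J ->
   forall (X : Type) (conv : set (set X) -> X -> Prop) (Hc : is_conv_space conv),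
     injective (eta I J Hc) /\
     (forall (F : set (set X)) (x : X), is_filter F ->
        (conv F x <-> pt_conv (fmap (eta I J Hc) F) (eta I J Hc x)))) /\
  (forall (I J : Type -> Prop), admissible_frm I J \/ admissible_cofrm I J ->
   forall (X : Type) (conv : set (set X) -> X -> Prop) (Hc : is_conv_space conv),
     conv_iso conv (@pt_conv I J X conv) (eta I J Hc)).
Proof.
split=> [I J _ X conv Hc|I J adm X conv Hc].
  by split=> [|F x _]; [exact: eta_inj|exact: conv_eta].
exact/eta_conv_iso/points_eta_fun.
Qed.
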